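(* Let $n,N\ge 1$ and $\varepsilon\ge 0$ be integers with $\varepsilon/n\le 1/2$ and $N<2^{n(1-h(\varepsilon/n))-1}$. Suppose the $N$ enrolled templates are distinct (drawn uniformly without replacement from $\mathbb{Z}_2^n$), so that the success probability of a single uniformly random guess is $$p=1-\prod_{\ell=0}^{N-1}\left(1-\frac{2^n}{2^n-\ell}V_\varepsilon\right),$$ and let $m_{out}=-\ln 2/\ln(1-p)$ be the median number of trials for the attacker to successfully impersonate a user. Then $$m_{out}=\Omega\left(2^{n(1-h(\varepsilon/n))-\log_2(N)-\log_2\left(1+6\frac{N-1}{2^{n+1}}\right)}\right)$$ and $$m_{out}=O\left(2^{n(1-h(\varepsilon/n))+\frac{1}{2}\log_2\left(\varepsilon\left(1-\frac{\varepsilon}{n}\right)\right)-\log_2 N-\log_2\left(1+\frac{N-1}{2^{n+1}}\right)}\right).$$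
   Context: Templates are binary vectors in $\mathbb{Z}_2^n$ compared with the Hamming distance $d_{\mathcal H}$; a guess $t$ is accepted against enrolled template $v$ if $d_{\mathcal H}(t,v)\le\varepsilon$. The attacker draws independent uniformly random templates until one is accepted against some enrolled template. $|B_\varepsilon|=\sum_{k=0}^{\varepsilon}\binom{n}{k}$ is the size of a Hamming ball of radius $\varepsilon$, $V_\varepsilon=|B_\varepsilon|/2^n$, and $h(x)=-x\log_2x-(1-x)\log_2(1-x)$ is the binary entropy function. *)

From Stdlib Require Import Reals.
Open Scope R_scope.

Definition log2 (x : R) : R := ln x / ln 2.

(* binary entropy h(x) = -x log2 x - (1-x) log2 (1-x)
   (Stdlib's ln is 0 on nonpositive arguments, so 0*log2 0 = 0 as usual) *)
Definition h (x : R) : R := - x * log2 x - (1 - x) * log2 (1 - x).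

(* |B_eps| = sum_{k=0}^{eps} C(n,k)  (sum_f_R0 f m = f 0 + ... + f m) *)
Definition ball_size (n eps : nat) : R := sum_f_R0 (fun k => C n k) eps.

Definition Veps (n eps : nat) : R := ball_size n eps / 2 ^ n.

Fixpoint prodR (f : nat -> R) (N : nat) : R :=
  match N with
  | O => 1
  | S k => prodR f k * f k
  end.

Definition p_succ (n N eps : nat) : R :=
  1 - prodR (fun l => 1 - 2 ^ n / (2 ^ n - INR l) * Veps n eps) N.

Definition m_out (n N eps : nat) : R := - ln 2 / ln (1 - p_succ n N eps).

From Stdlib Require Import Reals Lra Lia Psatz.
From Coquelicot Require Import Coquelicot.
Open Scope R_scope.

(* The failure probability 1 - p of one guess is a product of N
   factors 1 - q_l with V <= q_l <= 2 V <= 1/2 (the hypothesis on N gives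
   2 N V < 1), so -ln (1 - p) lies between N V and 4 N V and m_out is within a
   constant factor of 1 / (N V).  The ball volume V is compared with
   2^(-n (1 - h(eps/n))) = (eps/n)^eps (1 - eps/n)^(n - eps): the binomial
   expansion of ((eps/n) + (1 - eps/n))^n gives the upper bound, and a Stirling
   estimate of C(n, eps) gives the lower bound up to the factor
   e^(3/2) sqrt(eps (1 - eps/n)).  The terms log2 (1 + c (N - 1) / 2^(n+1)) are
   nonnegative, and at most 1 for c = 1, so they only affect the constants. *)

Lemma ln_1p_ge_pade x : 0 <= x -> 2 * x / (2 + x) <= ln (1 + x).
Proof.
intros Hx. destruct (Req_dec x 0) as [->|Hx0].
{ rewrite !Rplus_0_r, ln_1. lra. }
destruct (MVT_cor2 (fun t => ln (1 + t) - 2 * t / (2 + t))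
                   (fun t => 1 / (1 + t) - 4 / (2 + t) ^ 2) 0 x)
  as [c [Hmvt Hc]]; [lra| |].
{ intros c Hc. apply is_derive_Reals. auto_derive; [lra | field; lra]. }
assert (Hd : 1 / (1 + c) - 4 / (2 + c) ^ 2 = c ^ 2 / ((1 + c) * (2 + c) ^ 2))
  by (field; lra).
assert (0 <= c ^ 2 / ((1 + c) * (2 + c) ^ 2) * (x - 0)).
{ apply Rmult_le_pos; [|lra].
  apply Rdiv_le_0_compat; [nra | apply Rmult_lt_0_compat; nra]. }
rewrite Hd, !Rplus_0_r, ln_1 in Hmvt. lra.
Qed.

Lemma ln_1p_le_cubic x : 0 <= x -> ln (1 + x) <= x - x ^ 2 / 2 + x ^ 3 / 3.
Proof.
intros Hx. destruct (Req_dec x 0) as [->|Hx0].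
{ rewrite !Rplus_0_r, ln_1. lra. }
destruct (MVT_cor2 (fun t => t - t ^ 2 / 2 + t ^ 3 / 3 - ln (1 + t))
                   (fun t => 1 - t + t ^ 2 - 1 / (1 + t)) 0 x)
  as [c [Hmvt Hc]]; [lra| |].
{ intros c Hc. apply is_derive_Reals. auto_derive; [lra | field; lra]. }
assert (Hd : 1 - c + c ^ 2 - 1 / (1 + c) = c ^ 3 / (1 + c)) by (field; lra).
assert (0 <= c ^ 3 / (1 + c) * (x - 0)).
{ apply Rmult_le_pos; [|lra]. apply Rdiv_le_0_compat; [apply pow_le|]; lra. }
rewrite Hd, !Rplus_0_r, ln_1 in Hmvt. lra.
Qed.

Lemma ln2_pos : 0 < ln 2.
Proof. rewrite <- ln_1. apply ln_increasing; lra. Qed.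

Definition stirling_rem (m : nat) : R :=
  ln (INR (Factorial.fact m)) + INR m - (INR m + / 2) * ln (INR m).

Lemma stirling_rem_succ m : (1 <= m)%nat ->
  stirling_rem (S m) = stirling_rem m + 1 - (INR m + / 2) * ln (1 + / INR m).
Proof.
intros Hm. assert (1 <= INR m) by (apply (le_INR 1); lia).
unfold stirling_rem. rewrite fact_simpl, mult_INR, S_INR.
rewrite ln_mult by (lra || apply INR_fact_lt_0).
replace (1 + / INR m) with ((INR m + 1) / INR m) by (field; lra).
rewrite ln_div by lra. ring.
Qed.

Lemma stirling_step_ge_1 x : 1 <= x -> 1 <= (x + / 2) * ln (1 + / x).
Proof.
intros Hx. assert (0 < / x) by (apply Rinv_0_lt_compat; lra).
assert (E : (x + / 2) * (2 * / x / (2 + / x)) = 1) by (field; lra).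
rewrite <- E at 1. apply Rmult_le_compat_l; [lra|]. apply ln_1p_ge_pade. lra.
Qed.

Lemma stirling_step_le x : 1 <= x ->
  (x + / 2) * ln (1 + / x) - 1 <= / (2 * x) - / (2 * (x + 1)).
Proof.
intros Hx. set (y := / x).
assert (Hy0 : 0 < y) by (apply Rinv_0_lt_compat; lra).
assert (Hy1 : y <= 1) by (unfold y; rewrite <- Rinv_1; apply Rinv_le_contravar; lra).
apply Rle_trans with ((x + / 2) * (y - y ^ 2 / 2 + y ^ 3 / 3) - 1).
{ apply Rplus_le_compat_r, Rmult_le_compat_l; [lra|]. apply ln_1p_le_cubic. lra. }
replace x with (/ y) by (unfold y; field; lra).
replace ((/ y + / 2) * (y - y ^ 2 / 2 + y ^ 3 / 3) - 1)
  with (y ^ 2 * (1 + 3 * y + 2 * y ^ 2) / (12 * (1 + y))) by (field; lra).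
replace (/ (2 * / y) - / (2 * (/ y + 1))) with (y ^ 2 * 6 / (12 * (1 + y)))
  by (field; lra).
apply Rmult_le_compat_r; [apply Rlt_le, Rinv_0_lt_compat; lra|].
apply Rmult_le_compat_l; [apply pow_le|]; nra.
Qed.

(* The lower bound carries the telescoping correction 1/(2m) through the induction. *)
Lemma stirling_rem_bounds m : (1 <= m)%nat ->
  / 2 + / (2 * INR m) <= stirling_rem m <= 1.
Proof.
induction m as [|m IH]; intros Hm; [lia|].
destruct (Nat.eq_dec m 0) as [->|Hm0].
{ unfold stirling_rem. simpl. rewrite ln_1. lra. }
assert (HR : 1 <= INR m) by (apply (le_INR 1); lia).
specialize (IH ltac:(lia)).
rewrite stirling_rem_succ, S_INR by lia.
assert (A := stirling_step_ge_1 (INR m) HR).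
assert (B := stirling_step_le (INR m) HR).
lra.
Qed.

Lemma ln_binomial_ge k j : (1 <= k)%nat -> (1 <= j)%nat ->
  - (3 / 2) + (INR (k + j) + / 2) * ln (INR (k + j))
    - (INR k + / 2) * ln (INR k) - (INR j + / 2) * ln (INR j)
  <= ln (Binomial.C (k + j) k).
Proof.
intros Hk Hj. unfold Binomial.C. replace (k + j - k)%nat with j by lia.
assert (Bk := stirling_rem_bounds k Hk).
assert (Bj := stirling_rem_bounds j Hj).
assert (Bn := stirling_rem_bounds (k + j) ltac:(lia)).
assert (0 < / (2 * INR (k + j))).
{ apply Rinv_0_lt_compat, Rmult_lt_0_compat; [lra | apply lt_0_INR; lia]. }
unfold stirling_rem in *.
rewrite ln_div, ln_mult by (apply INR_fact_lt_0 || apply Rmult_lt_0_compat; apply INR_fact_lt_0).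
rewrite plus_INR in *. lra.
Qed.

Lemma sum_f_R0_mono f m n : (forall k, 0 <= f k) -> (m <= n)%nat ->
  sum_f_R0 f m <= sum_f_R0 f n.
Proof.
intros Hf Hmn. induction Hmn as [|n Hmn IH]; [lra|].
simpl. specialize (Hf (S n)). lra.
Qed.

Lemma sum_f_R0_ge_term f m i : (forall k, 0 <= f k) -> (i <= m)%nat ->
  f i <= sum_f_R0 f m.
Proof.
intros Hf Him. apply Rle_trans with (sum_f_R0 f i); [|apply sum_f_R0_mono; assumption].
destruct i as [|i]; simpl; [lra|].
assert (0 <= sum_f_R0 f i) by (apply cond_pos_sum; exact Hf). lra.
Qed.

Lemma binomial_pos n k : 0 < Binomial.C n k.
Proof.
unfold Binomial.C. apply Rdiv_lt_0_compat; [|apply Rmult_lt_0_compat];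
  apply INR_fact_lt_0.
Qed.

Lemma ball_size_ge_binomial n k i : (i <= k)%nat -> Binomial.C n i <= ball_size n k.
Proof.
intros Hik. apply (sum_f_R0_ge_term (fun i => Binomial.C n i)); [|exact Hik].
intros; apply Rlt_le, binomial_pos.
Qed.

Lemma ball_size_ge_1 n k : 1 <= ball_size n k.
Proof.
replace 1 with (Binomial.C n 0) by
  (unfold Binomial.C; rewrite Nat.sub_0_r; simpl; field; apply INR_fact_neq_0).
apply ball_size_ge_binomial. lia.
Qed.

Lemma bernoulli_weight_antitone p n i k : 0 <= p <= 1 - p ->
  (i <= k)%nat -> (k <= n)%nat ->
  p ^ k * (1 - p) ^ (n - k) <= p ^ i * (1 - p) ^ (n - i).
Proof.
intros Hp Hik Hkn.
replace k with (i + (k - i))%nat at 1 by lia.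
replace (n - i)%nat with ((n - k) + (k - i))%nat by lia.
rewrite !pow_add.
assert (p ^ (k - i) <= (1 - p) ^ (k - i)) by (apply pow_incr; lra).
assert (0 <= p ^ i * (1 - p) ^ (n - k)) by (apply Rmult_le_pos; apply pow_le; lra).
replace (p ^ i * p ^ (k - i) * (1 - p) ^ (n - k))
  with (p ^ i * (1 - p) ^ (n - k) * p ^ (k - i)) by ring.
replace (p ^ i * ((1 - p) ^ (n - k) * (1 - p) ^ (k - i)))
  with (p ^ i * (1 - p) ^ (n - k) * (1 - p) ^ (k - i)) by ring.
apply Rmult_le_compat_l; assumption.
Qed.

(* For i <= k, the i-th term of the expansion of (p + (1-p))^n dominates C(n,i) p^k (1-p)^(n-k). *)
Lemma ball_size_bernoulli_weight_le_1 n k p : (k <= n)%nat -> 0 <= p <= 1 - p ->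
  ball_size n k * (p ^ k * (1 - p) ^ (n - k)) <= 1.
Proof.
intros Hkn Hp.
assert (Hexp := binomial p (1 - p) n).
replace (p + (1 - p)) with 1 in Hexp by ring. rewrite pow1 in Hexp.
set (term := fun i => Binomial.C n i * p ^ i * (1 - p) ^ (n - i)) in Hexp.
assert (Hterm : forall i, 0 <= term i).
{ intros i. unfold term.
  apply Rmult_le_pos; [apply Rmult_le_pos|]; [apply Rlt_le, binomial_pos | |];
    apply pow_le; lra. }
apply Rle_trans with (sum_f_R0 term k).
- unfold ball_size. rewrite Rmult_comm, scal_sum.
  apply sum_Rle. intros i Hi. unfold term. rewrite Rmult_assoc.
  apply Rmult_le_compat_l; [apply Rlt_le, binomial_pos|].
  apply bernoulli_weight_antitone; [exact Hp | exact Hi | exact Hkn].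
- rewrite Hexp. apply sum_f_R0_mono; assumption.
Qed.

Lemma exp_INR_mul_ln k x : 0 < x \/ k = 0%nat -> exp (INR k * ln x) = x ^ k.
Proof.
intros [Hx | ->].
- apply Rpower_pow. exact Hx.
- simpl. rewrite Rmult_0_l. apply exp_0.
Qed.

(* Holds also at k = 0 and k = n, where the junk value ln 0 = 0 matches 0 ^ 0 = 1. *)
Lemma Rpower2_entropy n k : (1 <= n)%nat -> (k <= n)%nat ->
  Rpower 2 (INR n * (1 - h (INR k / INR n)))
  = 2 ^ n * (INR k / INR n) ^ k * (1 - INR k / INR n) ^ (n - k).
Proof.
intros Hn Hkn. assert (Hn0 : 0 < INR n) by (apply lt_0_INR; lia).
assert (Hln2 := ln2_pos).
set (p := INR k / INR n).
assert (Hnk : INR (n - k) = INR n * (1 - p)) by (unfold p; rewrite minus_INR by lia; field; lra).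
assert (Hk : INR k = INR n * p) by (unfold p; field; lra).
unfold Rpower.
replace (INR n * (1 - h p) * ln 2)
  with (INR n * ln 2 + INR k * ln p + INR (n - k) * ln (1 - p))
  by (rewrite Hnk, Hk; unfold h, log2; field; lra).
rewrite !exp_plus, <- !exp_INR_mul_ln.
- reflexivity.
- destruct (Nat.eq_dec k n) as [->|Hne]; [right; lia|].
  left. assert (INR k < INR n) by (apply lt_INR; lia).
  assert (p * INR n < INR n) by (unfold p; field_simplify; lra).
  nra.
- destruct k as [|k]; [right; reflexivity|].
  left. apply Rdiv_lt_0_compat; [apply lt_0_INR; lia | lra].
- left; lra.
Qed.

Lemma double_le_of_ratio_le_half n k : (1 <= n)%nat ->
  INR k / INR n <= 1 / 2 -> (2 * k <= n)%nat.
Proof.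
intros Hn Hk. assert (0 < INR n) by (apply lt_0_INR; lia).
apply INR_le. rewrite mult_INR. simpl.
apply Rmult_le_compat_r with (r := INR n) in Hk; [|lra].
unfold Rdiv in Hk. rewrite Rmult_assoc, Rinv_l in Hk by lra. lra.
Qed.

Lemma Veps_mul_Rpower_entropy_le_1 n k : (1 <= n)%nat -> INR k / INR n <= 1 / 2 ->
  Veps n k * Rpower 2 (INR n * (1 - h (INR k / INR n))) <= 1.
Proof.
intros Hn Hk. assert (Hkn := double_le_of_ratio_le_half n k Hn Hk).
assert (0 < 2 ^ n) by (apply pow_lt; lra).
assert (0 <= INR k / INR n) by (apply Rdiv_le_0_compat; [apply pos_INR | apply lt_0_INR; lia]).
rewrite Rpower2_entropy by lia. unfold Veps.
replace (ball_size n k / 2 ^ n * (2 ^ n * (INR k / INR n) ^ k * (1 - INR k / INR n) ^ (n - k)))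
  with (ball_size n k * ((INR k / INR n) ^ k * (1 - INR k / INR n) ^ (n - k)))
  by (field; lra).
apply ball_size_bernoulli_weight_le_1; lra || lia.
Qed.

Lemma inv_pow2_le_Veps n k : / 2 ^ n <= Veps n k.
Proof.
assert (0 < 2 ^ n) by (apply pow_lt; lra).
unfold Veps, Rdiv. rewrite <- (Rmult_1_l (/ 2 ^ n)) at 1.
apply Rmult_le_compat_r; [apply Rlt_le, Rinv_0_lt_compat; lra | apply ball_size_ge_1].
Qed.

Lemma Veps_pos n k : 0 < Veps n k.
Proof.
apply Rlt_le_trans with (/ 2 ^ n); [|apply inv_pow2_le_Veps].
apply Rinv_0_lt_compat, pow_lt; lra.
Qed.

Lemma one_le_of_ln_nonneg y : 0 < y -> 0 <= ln y -> 1 <= y.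
Proof.
intros Hy Hln. rewrite <- (exp_ln y) by exact Hy.
assert (H := exp_ineq1_le (ln y)). lra.
Qed.

Lemma binomial_entropy_lower k j : (1 <= k)%nat -> (1 <= j)%nat ->
  1 <= exp (3 / 2) * sqrt (INR k * (INR j / INR (k + j)))
       * (INR k / INR (k + j)) ^ k * (INR j / INR (k + j)) ^ j * Binomial.C (k + j) k.
Proof.
intros Hk Hj.
assert (Hk0 : 0 < INR k) by (apply lt_0_INR; lia).
assert (Hj0 : 0 < INR j) by (apply lt_0_INR; lia).
assert (Hn : INR (k + j) = INR k + INR j) by apply plus_INR.
assert (Hn0 : 0 < INR (k + j)) by lra.
assert (Hz : 0 < INR k * (INR j / INR (k + j)))
  by (apply Rmult_lt_0_compat; [|apply Rdiv_lt_0_compat]; lra).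
assert (Hs : 0 < sqrt (INR k * (INR j / INR (k + j)))) by (apply sqrt_lt_R0; lra).
assert (Hsqrt : ln (sqrt (INR k * (INR j / INR (k + j))))
                = ln (INR k * (INR j / INR (k + j))) / 2).
{ rewrite <- (sqrt_sqrt (INR k * (INR j / INR (k + j)))) at 2 by lra.
  rewrite ln_mult by lra. field. }
assert (Hak : 0 < (INR k / INR (k + j)) ^ k) by (apply pow_lt, Rdiv_lt_0_compat; lra).
assert (Hbj : 0 < (INR j / INR (k + j)) ^ j) by (apply pow_lt, Rdiv_lt_0_compat; lra).
assert (HC := binomial_pos (k + j) k).
assert (He := exp_pos (3 / 2)).
apply one_le_of_ln_nonneg.
- repeat (assumption || apply Rmult_lt_0_compat).
- rewrite !ln_mult by repeat (assumption || apply Rmult_lt_0_compat).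
  rewrite Hsqrt, ln_exp, !ln_pow, ln_mult, !ln_div by (lra || apply Rdiv_lt_0_compat; lra).
  assert (B := ln_binomial_ge k j Hk Hj). rewrite Hn in *. lra.
Qed.

Lemma inv_Veps_le n k : (1 <= k)%nat -> (k < n)%nat ->
  / Veps n k
  <= exp (3 / 2) * sqrt (INR k * (1 - INR k / INR n))
     * Rpower 2 (INR n * (1 - h (INR k / INR n))).
Proof.
intros Hk Hkn.
destruct (Nat.le_exists_sub k n ltac:(lia)) as [j [Hnj _]].
replace n with (k + j)%nat in * by lia. clear Hnj.
assert (Hj : (1 <= j)%nat) by lia.
assert (Hn0 : 0 < INR (k + j)) by (apply lt_0_INR; lia).
assert (H2 : 0 < 2 ^ (k + j)) by (apply pow_lt; lra).
assert (HC := binomial_pos (k + j) k).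
assert (Hball := ball_size_ge_binomial (k + j) k k (le_n k)).
assert (Hcompl : 1 - INR k / INR (k + j) = INR j / INR (k + j))
  by (rewrite plus_INR in *; field; lra).
rewrite Rpower2_entropy, Hcompl by lia.
replace (k + j - k)%nat with j by lia.
assert (Hlow := binomial_entropy_lower k j Hk Hj).
apply Rle_trans with (2 ^ (k + j) / Binomial.C (k + j) k).
- unfold Veps. rewrite Rinv_div. unfold Rdiv.
  apply Rmult_le_compat_l; [lra|]. apply Rinv_le_contravar; lra.
- replace (exp (3 / 2) * sqrt (INR k * (INR j / INR (k + j)))
           * (2 ^ (k + j) * (INR k / INR (k + j)) ^ k * (INR j / INR (k + j)) ^ j))
    with (2 ^ (k + j) * (exp (3 / 2) * sqrt (INR k * (INR j / INR (k + j)))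
                         * (INR k / INR (k + j)) ^ k * (INR j / INR (k + j)) ^ j))
    by ring.
  unfold Rdiv. apply Rmult_le_compat_l; [lra|].
  apply Rmult_le_reg_r with (Binomial.C (k + j) k); [exact HC|].
  rewrite Rinv_l by lra. exact Hlow.
Qed.

Lemma neg_ln_1m_bounds q : 0 <= q <= 1 / 2 -> q <= - ln (1 - q) <= 2 * q.
Proof.
intros Hq. split.
- assert (H := ln_le (1 - q) (exp (- q)) ltac:(lra)
                 ltac:(assert (H := exp_ineq1_le (- q)); lra)).
  rewrite ln_exp in H. lra.
- assert (Hinv : / (1 + 2 * q) <= 1 - q).
  { apply Rmult_le_reg_r with (1 + 2 * q); [lra|]. rewrite Rinv_l by lra. nra. }
  assert (Hexp : exp (- (2 * q)) <= 1 - q).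
  { rewrite exp_Ropp. eapply Rle_trans; [|exact Hinv].
    apply Rinv_le_contravar; [lra | apply exp_ineq1_le]. }
  apply ln_le in Hexp; [|apply exp_pos]. rewrite ln_exp in Hexp. lra.
Qed.

Lemma neg_ln_prodR_bounds (f : nat -> R) N a b :
  (forall l, (l < N)%nat -> 0 < f l /\ a <= - ln (f l) <= b) ->
  0 < prodR f N /\ INR N * a <= - ln (prodR f N) <= INR N * b.
Proof.
induction N as [|N IH]; intros Hf; cbn [prodR].
- rewrite ln_1. simpl. lra.
- destruct IH as [Hpos [Hlo Hhi]]; [intros l Hl; apply Hf; lia|].
  destruct (Hf N (Nat.lt_succ_diag_r N)) as [HfN [Ha Hb]].
  rewrite ln_mult by assumption. rewrite S_INR.
  split; [apply Rmult_lt_0_compat|]; lra.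
Qed.

Lemma neg_ln_miss_prob_bounds (M V : R) N : 0 < V -> 2 * INR N * V < 1 ->
  2 * INR N <= M ->
  INR N * V <= - ln (prodR (fun l => 1 - M / (M - INR l) * V) N) <= INR N * (4 * V).
Proof.
intros HV HNV HNM.
apply neg_ln_prodR_bounds. intros l Hl.
assert (Hl1 : INR l + 1 <= INR N) by (rewrite <- S_INR; apply le_INR; lia).
assert (Hl0 : 0 <= INR l) by apply pos_INR.
set (q := M / (M - INR l) * V).
assert (Hq : V <= q <= 2 * V).
{ unfold q. split; apply Rmult_le_reg_r with (M - INR l); try lra;
  unfold Rdiv; field_simplify; nra. }
(* q <= 1/2 because N l <= N (N - 1) <= M (N - 1) and 2 M V < M / N. *)
assert (Hq2 : q <= 1 / 2).
{ unfold q. apply Rmult_le_reg_r with (2 * (M - INR l)); [lra|].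
  unfold Rdiv. field_simplify; [|lra]. nra. }
assert (B := neg_ln_1m_bounds q ltac:(lra)).
split; [|split]; lra.
Qed.

Lemma Rpower2_log2 x : 0 < x -> Rpower 2 (log2 x) = x.
Proof.
intros Hx. assert (H := ln2_pos). unfold Rpower, log2.
replace (ln x / ln 2 * ln 2) with (ln x) by (field; lra). apply exp_ln, Hx.
Qed.

Lemma Rpower2_sub_log2 a x : 0 < x -> Rpower 2 (a - log2 x) = Rpower 2 a / x.
Proof.
intros Hx. unfold Rminus. rewrite Rpower_plus, Rpower_Ropp, Rpower2_log2 by exact Hx.
reflexivity.
Qed.

Lemma Rpower2_half_log2 x : 0 < x -> Rpower 2 (/ 2 * log2 x) = sqrt x.
Proof.
intros Hx. rewrite Rmult_comm, <- Rpower_mult, Rpower2_log2 by exact Hx.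
apply Rpower_sqrt, Hx.
Qed.

Lemma collision_regime n N eps : (1 <= n)%nat ->
  INR eps / INR n <= 1 / 2 ->
  INR N < Rpower 2 (INR n * (1 - h (INR eps / INR n)) - 1) ->
  2 * INR N * Veps n eps < 1 /\ 2 * INR N <= 2 ^ n.
Proof.
intros Hn Heps HNT.
assert (HVT := Veps_mul_Rpower_entropy_le_1 n eps Hn Heps).
assert (HV2 := inv_pow2_le_Veps n eps).
set (T := Rpower 2 (INR n * (1 - h (INR eps / INR n)))) in *.
set (V := Veps n eps) in *.
replace 1 with (log2 2) in HNT at 2 by (unfold log2; field; apply Rgt_not_eq, ln2_pos).
rewrite Rpower2_sub_log2 in HNT by lra. fold T in HNT.
assert (H2n : 0 < 2 ^ n) by (apply pow_lt; lra).
assert (HV := Veps_pos n eps). fold V in HV.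
assert (HN0 : 0 <= INR N) by apply pos_INR.
assert (HNV : 2 * INR N * V < 1) by nra.
split; [exact HNV|].
apply Rmult_le_reg_r with (/ 2 ^ n); [apply Rinv_0_lt_compat; lra|].
rewrite Rinv_r by lra. nra.
Qed.

Lemma m_out_bounds n N eps : (1 <= n)%nat -> (1 <= N)%nat ->
  INR eps / INR n <= 1 / 2 ->
  INR N < Rpower 2 (INR n * (1 - h (INR eps / INR n)) - 1) ->
  ln 2 / (4 * INR N * Veps n eps) <= m_out n N eps <= ln 2 / (INR N * Veps n eps).
Proof.
intros Hn HN Heps HNT.
destruct (collision_regime n N eps Hn Heps HNT) as [HNV HNM].
assert (HV := Veps_pos n eps).
set (V := Veps n eps) in *.
assert (HN1 : 1 <= INR N) by (apply (le_INR 1); lia).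
destruct (neg_ln_miss_prob_bounds (2 ^ n) V N HV HNV HNM) as [Hlo Hhi].
assert (HL : 0 < - ln (prodR (fun l => 1 - 2 ^ n / (2 ^ n - INR l) * V) N)) by nra.
unfold m_out, p_succ. fold V.
replace (1 - (1 - prodR (fun l => 1 - 2 ^ n / (2 ^ n - INR l) * V) N))
  with (prodR (fun l => 1 - 2 ^ n / (2 ^ n - INR l) * V) N) by ring.
set (L := - ln (prodR (fun l => 1 - 2 ^ n / (2 ^ n - INR l) * V) N)) in *.
replace (- ln 2 / ln (prodR (fun l => 1 - 2 ^ n / (2 ^ n - INR l) * V) N))
  with (ln 2 / L) by (unfold L; field; unfold L in HL; lra).
assert (Hln2 := ln2_pos).
unfold Rdiv. split; apply Rmult_le_compat_l, Rinv_le_contravar; nra.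
Qed.

Lemma template_ratio_bounds n N : (1 <= N)%nat -> 2 * INR N <= 2 ^ n ->
  0 <= (INR N - 1) / 2 ^ (n + 1) <= 1.
Proof.
intros HN HNM.
assert (HN1 : 1 <= INR N) by (apply (le_INR 1); lia).
assert (H2n : 0 < 2 ^ (n + 1)) by (apply pow_lt; lra).
rewrite pow_add in *. simpl in *.
split; [apply Rdiv_le_0_compat; lra|].
apply Rmult_le_reg_r with (2 ^ n * (2 * 1)); [lra|].
unfold Rdiv. rewrite Rmult_assoc, Rinv_l; lra.
Qed.

Lemma m_out_ge n N eps D : (1 <= n)%nat -> (1 <= N)%nat ->
  INR eps / INR n <= 1 / 2 ->
  INR N < Rpower 2 (INR n * (1 - h (INR eps / INR n)) - 1) -> 1 <= D ->
  ln 2 / 4 * Rpower 2 (INR n * (1 - h (INR eps / INR n)) - log2 (INR N) - log2 D)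
  <= m_out n N eps.
Proof.
intros Hn HN Heps HNT HD.
destruct (m_out_bounds n N eps Hn HN Heps HNT) as [Hlo _].
assert (HVT := Veps_mul_Rpower_entropy_le_1 n eps Hn Heps).
assert (HV := Veps_pos n eps).
assert (HN1 : 1 <= INR N) by (apply (le_INR 1); lia).
assert (Hln2 := ln2_pos).
rewrite !Rpower2_sub_log2 by lra.
set (T := Rpower 2 (INR n * (1 - h (INR eps / INR n)))) in *.
set (V := Veps n eps) in *.
eapply Rle_trans; [|exact Hlo].
replace (ln 2 / (4 * INR N * V)) with (ln 2 / 4 * (/ V / INR N)) by (field; lra).
apply Rmult_le_compat_l; [lra|].
assert (HT : 0 < T) by apply exp_pos.
assert (HTV : T <= / V).
{ apply Rmult_le_reg_l with V; [exact HV|]. rewrite Rinv_r; lra. }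
assert (HinvD : / D <= 1) by (rewrite <- Rinv_1; apply Rinv_le_contravar; lra).
assert (0 < / D) by (apply Rinv_0_lt_compat; lra).
assert (0 < / INR N) by (apply Rinv_0_lt_compat; lra).
assert (0 <= T * / INR N) by nra.
unfold Rdiv. nra.
Qed.

Lemma m_out_le n N eps D : (1 <= n)%nat -> (1 <= N)%nat -> (1 <= eps)%nat ->
  INR eps / INR n <= 1 / 2 ->
  INR N < Rpower 2 (INR n * (1 - h (INR eps / INR n)) - 1) -> 0 < D <= 2 ->
  m_out n N eps
  <= 2 * ln 2 * exp (3 / 2)
     * Rpower 2 (INR n * (1 - h (INR eps / INR n))
                 + / 2 * log2 (INR eps * (1 - INR eps / INR n))
                 - log2 (INR N) - log2 D).
Proof.
intros Hn HN Heps Hratio HNT HD.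
destruct (m_out_bounds n N eps Hn HN Hratio HNT) as [_ Hhi].
assert (Hkn := double_le_of_ratio_le_half n eps Hn Hratio).
assert (HinvV := inv_Veps_le n eps Heps ltac:(lia)).
assert (HV := Veps_pos n eps).
assert (HN1 : 1 <= INR N) by (apply (le_INR 1); lia).
assert (Hln2 := ln2_pos).
assert (Hy : 0 < INR eps * (1 - INR eps / INR n))
  by (apply Rmult_lt_0_compat; [apply lt_0_INR; lia | lra]).
rewrite !Rpower2_sub_log2, Rpower_plus, Rpower2_half_log2 by lra.
set (E := exp (3 / 2) * sqrt (INR eps * (1 - INR eps / INR n))
          * Rpower 2 (INR n * (1 - h (INR eps / INR n)))) in *.
set (V := Veps n eps) in *.
eapply Rle_trans; [exact Hhi|].
assert (HD2 : 1 <= 2 * / D).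
{ apply Rmult_le_reg_r with D; [lra|]. rewrite Rmult_assoc, Rinv_l; lra. }
assert (0 < ln 2 * / INR N) by (apply Rmult_lt_0_compat, Rinv_0_lt_compat; lra).
assert (0 < / V) by (apply Rinv_0_lt_compat; lra).
assert (0 <= ln 2 * / INR N * E) by (apply Rmult_le_pos; lra).
replace (ln 2 / (INR N * V)) with (ln 2 * / INR N * / V) by (field; lra).
replace (2 * ln 2 * exp (3 / 2) * (Rpower 2 (INR n * (1 - h (INR eps / INR n)))
           * sqrt (INR eps * (1 - INR eps / INR n)) / INR N / D))
  with (ln 2 * / INR N * E * (2 * / D)) by (unfold E; field; lra).
nra.
Qed.

Theorem corollary4p2 :
  (exists c : R, 0 < c /\
     forall n N eps : nat,
       (1 <= n)%nat -> (1 <= N)%nat ->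
       INR eps / INR n <= 1 / 2 ->
       INR N < Rpower 2 (INR n * (1 - h (INR eps / INR n)) - 1) ->
       c * Rpower 2 (INR n * (1 - h (INR eps / INR n)) - log2 (INR N)
                     - log2 (1 + 6 * ((INR N - 1) / 2 ^ (n + 1))))
         <= m_out n N eps)
  /\
  (exists C : R, 0 < C /\
     forall n N eps : nat,
       (1 <= n)%nat -> (1 <= N)%nat -> (1 <= eps)%nat ->
       INR eps / INR n <= 1 / 2 ->
       INR N < Rpower 2 (INR n * (1 - h (INR eps / INR n)) - 1) ->
       m_out n N eps
         <= C * Rpower 2 (INR n * (1 - h (INR eps / INR n))
                          + / 2 * log2 (INR eps * (1 - INR eps / INR n))
                          - log2 (INR N)
                          - log2 (1 + (INR N - 1) / 2 ^ (n + 1)))).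
Proof.
assert (Hln2 := ln2_pos).
split.
- exists (ln 2 / 4). split; [lra|].
  intros n N eps Hn HN Heps HNT.
  destruct (collision_regime n N eps Hn Heps HNT) as [_ HNM].
  assert (Hratio := template_ratio_bounds n N HN HNM).
  apply m_out_ge; try assumption. lra.
- exists (2 * ln 2 * exp (3 / 2)). split; [assert (H := exp_pos (3 / 2)); nra|].
  intros n N eps Hn HN Heps Hratio HNT.
  destruct (collision_regime n N eps Hn Hratio HNT) as [_ HNM].
  assert (HD := template_ratio_bounds n N HN HNM).
  apply m_out_le; try assumption. lra.
Qed.
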